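(* Let $k\ge 1$. There is no strategy proof mechanism locating $k$ facilities on $[0,1]$ whose approximation ratio for the Gini index of utilities is bounded; that is, for every strategy proof mechanism $M$ for $k$ facilities and every constant $c>0$ there exist a number of agents $n$ and a profile $x=(x_1,\dots,x_n)\in[0,1]^n$ such that $G_u(M(x)) > c\cdot \min_{Y} G_u(Y)$, where the minimum ranges over all placements $Y$ of $k$ facilities in $[0,1]$.
   Context: Agents $1,\dots,n$ ($n\ge1$ arbitrary) report locations $x_1,\dots,x_n\in[0,1]$ (a profile). A mechanism for $k$ facilities maps every profile (for every $n$) to a placement $Y$ of $k$ facility locations in $[0,1]$. For a placement $Y$, agent $i$'s distance is $d_i=\min_{y\in Y}|x_i-y|$ and its utility is $u_i=1-d_i$. The Gini index of utilities of $Y$ is $G_u(Y)=\frac{\sum_{i=1}^n\sum_{j=1}^n|u_i-u_j|}{2n\sum_{i=1}^n u_i}$ (defined when $\sum_i u_i>0$). A mechanism $M$ is strategy proof if for every profile $x$, every agent $i$ and every $x_i'\in[0,1]$, the distance from the true location $x_i$ to the nearest facility of $M(x_1,\dots,x_i',\dots,x_n)$ is not strictly smaller than the distance from $x_i$ to the nearest facility of $M(x)$. The approximation ratio is bounded if there is a constant $c$ with $G_u(M(x))\le c\cdot\min_Y G_u(Y)$ for all profiles $x$. *)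

From mathcomp Require Import all_boot all_order all_algebra.
From mathcomp Require Import reals.
Set Implicit Arguments. Unset Strict Implicit. Unset Printing Implicit Defensive.
Import Order.TTheory GRing.Theory Num.Theory.
Local Open Scope ring_scope.

Section FacLoc.
Variable R : realType.

Definition profile n (x : 'I_n -> R) : Prop := forall i, 0 <= x i <= 1.

Definition placement k (Y : 'I_k -> R) : Prop := forall j, 0 <= Y j <= 1.

(* distance from p to the nearest facility of Y.  The fold starts from 1;
   for k >= 1 and points/facilities in [0,1] all distances are <= 1,
   so this is exactly min_j |p - Y j|. *)
Definition dist k (Y : 'I_k -> R) (p : R) : R :=
  \big[Num.min/1]_(j < k) `|p - Y j|.

Definition util k (Y : 'I_k -> R) (p : R) : R := 1 - dist Y p.

Definition sum_util k n (Y : 'I_k -> R) (x : 'I_n -> R) : R :=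
  \sum_(i < n) util Y (x i).

Definition gini k n (Y : 'I_k -> R) (x : 'I_n -> R) : R :=
  (\sum_(i < n) \sum_(j < n) `|util Y (x i) - util Y (x j)|)
  / (2 * n%:R * sum_util Y x).

Definition mechanism k := forall n : nat, ('I_n -> R) -> ('I_k -> R).

Definition mech_valid k (M : mechanism k) : Prop :=
  forall n (x : 'I_n -> R), profile x -> placement (M n x).

Definition update n (x : 'I_n -> R) (i : 'I_n) (v : R) : 'I_n -> R :=
  fun j => if j == i then v else x j.

Definition strategy_proof k (M : mechanism k) : Prop :=
  forall n (x : 'I_n -> R), profile x ->
  forall (i : 'I_n) (v : R), 0 <= v <= 1 ->
    dist (M n x) (x i) <= dist (M n (update x i v)) (x i).

End FacLoc.

From mathcomp Require Import all_boot all_order all_algebra.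
From mathcomp Require Import reals.
From mathcomp Require Import lra.
Set Implicit Arguments. Unset Strict Implicit. Unset Printing Implicit Defensive.
Import Order.TTheory GRing.Theory Num.Theory.
Local Open Scope ring_scope.

(* Take k + 1 agents, with u = 1/(8k): agent 0 at 2u and agent i >= 1 at 8iu.
   Some placement puts every agent at distance 3u, so the optimal Gini index is
   0 and the ratio is violated, whatever c, unless the mechanism gives all
   agents the same distance; the same holds after agent 0 misreports 0, with a
   placement putting everyone at distance 4u.  If the mechanism equalises the
   distances on both profiles, then on the true one the k + 1 agents are 6u
   apart and two of them share a nearest facility, so the common distance is
   at least 3u; on the misreported one the facility nearest to 0 lies at the
   common distance D' <= 4u, hence within 2u of agent 0's true location 2u,
   and the misreport is profitable. *)

Section Distance.
Variable R : realType.
Implicit Types (p q : R).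

Lemma dist_le1 k (Y : 'I_k -> R) p : dist Y p <= 1.
Proof. by rewrite /dist; elim/big_rec: _ => // j m _ Hm; rewrite ge_min Hm orbT. Qed.

Lemma dist_ge0 k (Y : 'I_k -> R) p : 0 <= dist Y p.
Proof. by rewrite /dist; elim/big_rec: _ => // j m _ Hm; rewrite le_min Hm normr_ge0. Qed.

Lemma dist_le k (Y : 'I_k -> R) p j : dist Y p <= `|p - Y j|.
Proof. by rewrite /dist (bigD1 j) //= ge_min lexx. Qed.

Lemma dist_ge k (Y : 'I_k -> R) p d :
  d <= 1 -> (forall j, d <= `|p - Y j|) -> d <= dist Y p.
Proof.
by move=> d_le1 d_le; rewrite /dist; elim/big_rec: _ => // j m _ Hm; rewrite le_min Hm d_le.
Qed.

Lemma dist_attained k (Y : 'I_k -> R) p : (0 < k)%N -> placement Y -> 0 <= p <= 1 ->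
  exists j, dist Y p = `|p - Y j|.
Proof.
move=> k_gt0 plY /andP[p0 p1].
have : dist Y p = 1 \/ exists j, dist Y p = `|p - Y j|.
  rewrite /dist; apply: (big_ind (fun m => m = 1 \/ exists j, m = `|p - Y j|)) => //.
  - by left.
  - by move=> a b Ha Hb; rewrite /Order.min; case: ifP.
  - by move=> j _; right; exists j.
case=> [dist1|//]; exists (Ordinal k_gt0); apply/le_anti; rewrite dist_le /=.
have /andP[y0 y1] := plY (Ordinal k_gt0).
by rewrite dist1 ler_norml; apply/andP; split; lra.
Qed.

Lemma dist0_attained k (Y : 'I_k -> R) : (0 < k)%N -> placement Y ->
  exists j, Y j = dist Y 0.
Proof.
move=> k_gt0 plY.
have [|j ->] := dist_attained k_gt0 plY (p := 0); first by rewrite lexx ler01.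
by exists j; rewrite sub0r normrN ger0_norm //; case/andP: (plY j).
Qed.

Lemma dist0_le_half k (Y : 'I_k -> R) q : (0 < k)%N -> placement Y -> 0 < q ->
  dist Y q = dist Y 0 -> 2 * dist Y 0 <= q.
Proof.
move=> k_gt0 plY q_gt0 eq_dist; have [j Yj] := dist0_attained k_gt0 plY.
have := dist_le Y q j; rewrite eq_dist Yj ler_normr => /orP[]; lra.
Qed.

Lemma two_share_nearest_facility k n (Y : 'I_k -> R) (x : 'I_n -> R) :
  (0 < k)%N -> (k < n)%N -> placement Y -> profile x ->
  exists i i', i != i' /\ `|x i - x i'| <= dist Y (x i) + dist Y (x i').
Proof.
move=> k_gt0 lt_kn plY px.
have nearest i : exists j, dist Y (x i) == `|x i - Y j|.
  by have [j ->] := dist_attained k_gt0 plY (px i); exists j.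
pose f i := xchoose (nearest i).
have /injectivePn[i [i' ne_ii' eq_f]] : ~~ injectiveb f.
  by apply: contraL lt_kn => /injectiveP/leq_card; rewrite !card_ord -leqNgt.
exists i, i'; split => //.
rewrite (eqP (xchooseP (nearest i))) (eqP (xchooseP (nearest i'))) -/(f i) -/(f i') eq_f.
by rewrite [`|x i' - _|]distrC ler_distD.
Qed.

End Distance.

Section Gini.
Variables (R : realType) (k n : nat).
Implicit Types (Y : 'I_k -> R) (x : 'I_n -> R).

Definition equidistant Y x := [forall i, forall i', dist Y (x i) == dist Y (x i')].

Lemma equidistantP Y x :
  reflect (forall i i', dist Y (x i) = dist Y (x i')) (equidistant Y x).
Proof.
apply: (iffP forallP) => [eq_dist i i' | eq_dist i]; first exact/eqP/(forallP (eq_dist i)).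
by apply/forallP => i'; rewrite (eq_dist i i').
Qed.

Lemma not_equidistant Y x :
  ~~ equidistant Y x -> exists i i', dist Y (x i) != dist Y (x i').
Proof.
by rewrite negb_forall => /existsP[i]; rewrite negb_forall => /existsP[i' ?]; exists i, i'.
Qed.

Lemma util_ge0 Y p : 0 <= util Y p.
Proof. by rewrite subr_ge0 dist_le1. Qed.

Lemma sum_util_gt0 Y x i : dist Y (x i) < 1 -> 0 < sum_util Y x.
Proof.
move=> lt_dist1; rewrite /sum_util (bigD1 i) //= ltr_pwDl ?subr_gt0 ?sumr_ge0 //.
by move=> ? _; apply: util_ge0.
Qed.

Lemma gini_ge0 Y x : 0 < sum_util Y x -> 0 <= gini Y x.
Proof.
move=> sum_gt0; rewrite divr_ge0 ?sumr_ge0 // => [i _|]; first exact: sumr_ge0.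
by rewrite !mulr_ge0 // ltW.
Qed.

Lemma gini_const Y x d : (forall i, dist Y (x i) = d) -> gini Y x = 0.
Proof.
move=> eq_dist; rewrite /gini big1 ?mul0r // => i _; rewrite big1 // => i' _.
by rewrite /util !eq_dist subrr normr0.
Qed.

Lemma gini_gt0 Y x i i' :
  dist Y (x i) != dist Y (x i') -> 0 < sum_util Y x -> 0 < gini Y x.
Proof.
move=> neq_dist sum_gt0; have n_gt0 : (0 < n)%N := leq_ltn_trans (leq0n i) (ltn_ord i).
rewrite divr_gt0 ?mulr_gt0 ?ltr0n //.
have term_gt0 : 0 < `|util Y (x i) - util Y (x i')|.
  by rewrite normr_gt0 subr_eq0 /util (inj_eq (addrI _)) eqr_opp.
rewrite (bigD1 i) //= (bigD1 i') //= ltr_wpDr ?ltr_pwDl ?sumr_ge0 // => j _.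
exact: sumr_ge0.
Qed.
End Gini.

Definition gini_ratio_exceeds (R : realType) k n (c : R) (Y : 'I_k -> R) (x : 'I_n -> R) :=
  [/\ (0 < n)%N, profile x, 0 < sum_util Y x &
    exists Y0 : 'I_k -> R,
      [/\ placement Y0, 0 < sum_util Y0 x,
          (forall Y' : 'I_k -> R, placement Y' -> 0 < sum_util Y' x ->
             gini Y0 x <= gini Y' x) &
          c * gini Y0 x < gini Y x]].

Lemma gini_ratio_exceeds_unequal (R : realType) k n (c : R) (Y Y0 : 'I_k -> R)
    (x : 'I_n -> R) d :
  profile x -> placement Y0 -> d < 1 -> (forall i, dist Y0 (x i) = d) ->
  ~~ equidistant Y x -> gini_ratio_exceeds c Y x.
Proof.
move=> px plY0 d_lt1 dY0 /not_equidistant[i [i' neq_dist]].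
have sumY_gt0 : 0 < sum_util Y x.
  have [lt_dist1|] := ltP (dist Y (x i)) 1; first exact: sum_util_gt0 lt_dist1.
  move=> le1_dist; have dist1 : dist Y (x i) = 1 by apply/le_anti; rewrite dist_le1.
  by apply: (sum_util_gt0 (i := i')); rewrite lt_neqAle dist_le1 -dist1 eq_sym neq_dist.
have gini_Y0 : gini Y0 x = 0 := gini_const dY0.
split=> //; first exact: leq_ltn_trans (leq0n i) (ltn_ord i).
exists Y0; split=> //.
- by apply: (sum_util_gt0 (i := i)); rewrite dY0.
- by move=> Y' _ sumY'_gt0; rewrite gini_Y0 gini_ge0.
- by rewrite gini_Y0 mulr0 (gini_gt0 neq_dist).
Qed.

Section Grid.
Variables (R : realType) (k : nat).
Hypothesis k_gt0 : (0 < k)%N.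

Let u : R := (8 * k%:R)^-1.

(* lra and nra do not see section-local facts, hence the [have := u_gt0] steps. *)
Let u_gt0 : 0 < u.
Proof. by rewrite invr_gt0 mulr_gt0 ?ltr0n. Qed.

Let k_ge1 : 1 <= k%:R :> R.
Proof. by rewrite ler1n. Qed.

Let ku : 8 * k%:R * u = 1.
Proof. by rewrite mulfV // mulf_neq0 ?pnatr_eq0 -?lt0n. Qed.

(* Facility j lies e u to the left of agent j + 1 and facility 0 also e u to the
   right of agent 0; for e <= 4 every other facility is farther away. *)
Definition grid_profile (e : R) (i : 'I_k.+1) : R :=
  if i == ord0 then (8 - 2 * e) * u else 8 * i%:R * u.

Definition grid_placement (e : R) (j : 'I_k) : R := (8 * j.+1%:R - e) * u.

Let ord_le (i : 'I_k.+1) : i%:R <= k%:R :> R.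
Proof. by rewrite ler_nat -ltnS. Qed.

Let ord_ge1 (i : 'I_k.+1) : i != ord0 -> 1 <= i%:R :> R.
Proof. by rewrite ler1n lt0n. Qed.

Lemma grid_profile_in (e : R) : 0 <= e <= 4 -> profile (grid_profile e).
Proof.
move=> /andP[e_ge0 e_le4] i; have := u_gt0; have := ku; rewrite /grid_profile.
case: eqP => [_|/eqP i_neq0]; first by have := k_ge1 => *; apply/andP; split; nra.
by have := ord_le i; have := ord_ge1 i_neq0 => *; apply/andP; split; nra.
Qed.

Lemma grid_placement_in (e : R) : 0 <= e <= 8 -> placement (grid_placement e).
Proof.
move=> /andP[e_ge0 e_le8] j; have := u_gt0; have := ku; rewrite /grid_placement.
have : j.+1%:R <= k%:R :> R by rewrite ler_nat.
have : 1 <= j.+1%:R :> R by rewrite ler1n.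
by move=> *; apply/andP; split; nra.
Qed.

Lemma dist_grid (e : R) (i : 'I_k.+1) :
  0 < e <= 4 -> dist (grid_placement e) (grid_profile e i) = e * u.
Proof.
move=> /andP[e_gt0 e_le4]; have := u_gt0; have := ku; have := k_ge1 => *.
rewrite /grid_profile /grid_placement; apply/le_anti/andP; split.
  case: eqP => [_|/eqP i_neq0].
    apply: le_trans (dist_le _ _ (Ordinal k_gt0)) _.
    by rewrite /= ler_norml; apply/andP; split; nra.
  have i_gt0 : (0 < i)%N by rewrite lt0n.
  have lt_i1k : (i.-1 < k)%N by rewrite -ltnS prednK.
  apply: le_trans (dist_le _ _ (Ordinal lt_i1k)) _.
  have : i%:R = i.-1.+1%:R :> R by rewrite prednK.
  by move=> *; rewrite ler_norml; apply/andP; split; nra.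
apply: dist_ge => [|j]; first by nra.
have := ler0n R j; case: eqP => [_|/eqP i_neq0] => *.
  by rewrite ler_normr; apply/orP; right; nra.
have [le_ij|lt_ji] := leqP i j.
  have : i%:R <= j%:R :> R by rewrite ler_nat.
  by move=> *; rewrite ler_normr; apply/orP; right; nra.
have : j.+1%:R <= i%:R :> R by rewrite ler_nat.
by move=> *; rewrite ler_normr; apply/orP; left; nra.
Qed.

Lemma grid_profile_separated (e : R) (i i' : 'I_k.+1) : 0 <= e <= 4 -> i != i' ->
  2 * e * u <= `|grid_profile e i - grid_profile e i'|.
Proof.
move=> /andP[e_ge0 e_le4].
wlog lt_ii' : i i' / (i < i')%N.
  move=> sep_lt ne_ii'; have [lt_ii'|lt_i'i|/val_inj eq_ii'] := ltngtP i i'.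
  - exact: sep_lt.
  - by rewrite distrC; apply: sep_lt; rewrite // eq_sym.
  - by rewrite eq_ii' eqxx in ne_ii'.
move=> _; have := u_gt0; have := ku => *.
have i'_neq0 : i' != ord0 by rewrite -lt0n (leq_ltn_trans (leq0n i)).
have := ord_ge1 i'_neq0; rewrite /grid_profile (negPf i'_neq0).
case: eqP => [_|/eqP i_neq0] => *.
  by rewrite ler_normr; apply/orP; right; nra.
have : i.+1%:R <= i'%:R :> R by rewrite ler_nat.
by move=> *; rewrite ler_normr; apply/orP; right; nra.
Qed.

Lemma gini_ratio_exceeds_grid (c e : R) (Y : 'I_k -> R) (x : 'I_k.+1 -> R) :
  0 < e <= 4 -> (forall i, x i = grid_profile e i) -> ~~ equidistant Y x ->
  gini_ratio_exceeds c Y x.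
Proof.
move=> e_range x_grid; have /andP[e_gt0 e_le4] := e_range.
apply: (@gini_ratio_exceeds_unequal _ _ _ c Y (grid_placement e) x (e * u)).
- by move=> i; rewrite x_grid; apply: grid_profile_in; rewrite ltW.
- by apply: grid_placement_in; apply/andP; split; lra.
- by have := u_gt0; have := ku; have := k_ge1 => *; nra.
- by move=> i; rewrite x_grid dist_grid.
Qed.

Lemma misreport_grid_profile (i : 'I_k.+1) :
  update (grid_profile 3) ord0 0 i = grid_profile 4 i.
Proof. by rewrite /update /grid_profile; case: eqP => // _; lra. Qed.

Lemma strategy_proof_unequal_on_grid (M : mechanism R k) :
  mech_valid M -> strategy_proof M ->
  ~~ equidistant (M _ (grid_profile 3)) (grid_profile 3) ||
  ~~ equidistant (M _ (update (grid_profile 3) ord0 0)) (update (grid_profile 3) ord0 0).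
Proof.
move=> valid sp; rewrite -negb_and.
apply/negP => /andP[/equidistantP eqx /equidistantP eqx'].
set x := grid_profile 3 in eqx eqx' *; set x' := update x ord0 0 in eqx'.
set Y := M _ x in eqx; set Y' := M _ x' in eqx'.
have e3 : 0 <= (3 : R) <= 4 by lra.
have px : profile x := grid_profile_in e3.
have px' : profile x'.
  by move=> i; rewrite /x' /x misreport_grid_profile; apply: grid_profile_in; lra.
have x'0 : x' ord0 = 0 by rewrite /x' /update eqxx.
have x'1 : x' (Ordinal (k_gt0 : (1 < k.+1)%N)) = 8 * u.
  by rewrite /x' /x misreport_grid_profile /grid_profile /= mulr1.
have x0 : x ord0 = 2 * u by rewrite /x /grid_profile eqxx; lra.
have D_ge : 3 * u <= dist Y (x ord0).
  have [i [i' [ne_ii' shared]]] :=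
    two_share_nearest_facility k_gt0 (ltnSn k) (valid _ _ px) px.
  have := grid_profile_separated e3 ne_ii'.
  by rewrite -/x !(eqx _ ord0) in shared => sep; lra.
have D'_le : 2 * dist Y' 0 <= 8 * u.
  rewrite -x'1; apply: dist0_le_half (valid _ _ px') _ _ => //.
    by rewrite x'1 mulr_gt0.
  by rewrite -x'0 (eqx' _ ord0).
have [j Y'j] := dist0_attained k_gt0 (valid _ _ px' : placement Y').
have truthful : dist Y (x ord0) <= dist Y' (x ord0) by apply: sp; rewrite ?lexx ?ler01.
have near := dist_le Y' (x ord0) j.
rewrite x0 Y'j in D_ge truthful near; have := dist_ge0 Y' 0; have := u_gt0.
by move: near; rewrite ler_normr => /orP[] *; lra.
Qed.

End Grid.

Theorem theorem1 (R : realType) (k : nat) (hk : (0 < k)%N)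
  (M : mechanism R k) (hM : mech_valid M) (hsp : strategy_proof M)
  (c : R) (hc : 0 < c) :
  exists (n : nat) (x : 'I_n -> R),
    [/\ (0 < n)%N, profile x, 0 < sum_util (M n x) x &
      exists Y0 : 'I_k -> R,
        [/\ placement Y0, 0 < sum_util Y0 x,
            (forall Y : 'I_k -> R, placement Y -> 0 < sum_util Y x ->
               gini Y0 x <= gini Y x) &
            c * gini Y0 x < gini (M n x) x]].
Proof.
have [unequal|unequal] := orP (strategy_proof_unequal_on_grid hk hM hsp).
  exists k.+1, (grid_profile 3).
  by apply: (gini_ratio_exceeds_grid hk c (e := 3)) unequal => //; lra.
exists k.+1, (update (grid_profile 3) ord0 0).
apply: (gini_ratio_exceeds_grid hk c (e := 4)) unequal; first lra.
exact: misreport_grid_profile.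
Qed.
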